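(* Under the standing setting and assumptions (A1)–(A3) described in the context, assume $\mathcal A$ is polyhedral. Then $\mathcal R(X)\neq\emptyset$ for every $X\in\mathcal X$.
   Context: Let $\mathcal X$ be a Hausdorff, first countable, locally convex topological vector space over $\mathbb R$ with dual $\mathcal X'$, partially ordered by a partial order $\geq$ with positive cone $\mathcal X_+=\{X\in\mathcal X: X\geq 0\}$. Let $\mathcal M\subset\mathcal X$ be a vector subspace with $1<\dim\mathcal M<\infty$, carrying the relative topology, and let $\pi:\mathcal M\to\mathbb R$ be linear. Standing assumptions: (A1) there is $U\in\mathcal M\cap\mathcal X_+$ with $\pi(U)=1$; (A2) $\mathcal A\subsetneq\mathcal X$ is closed, contains $0$, and satisfies $\mathcal A+\mathcal X_+\subset\mathcal A$; (A3) the map $\rho(X)=\inf\{\pi(Z): Z\in\mathcal M,\ X+Z\in\mathcal A\}$ is finitely valued and continuous on $\mathcal X$. The optimal payoff map is $\mathcal R(X)=\{Z\in\mathcal M: X+Z\in\mathcal A,\ \pi(Z)=\rho(X)\}$. $\mathcal A$ is polyhedral if it is a finite intersection of sets $\{X\in\mathcal X:\varphi(X)\geq\alpha\}$ with $\varphi\in\mathcal X'$, $\alpha\in\mathbb R$. *)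

From HB Require Import structures.
From mathcomp Require Import all_boot all_order all_algebra.
From mathcomp Require Import all_classical all_reals all_analysis.
Set Implicit Arguments. Unset Strict Implicit. Unset Printing Implicit Defensive.
Import Order.TTheory GRing.Theory Num.Theory numFieldNormedType.Exports.
Local Open Scope classical_set_scope.
Local Open Scope ring_scope.

Definition first_countable (T : topologicalType) : Prop :=
  forall x : T, exists B : nat -> set T,
    (forall n, nbhs x (B n)) /\ (forall U, nbhs x U -> exists n, B n `<=` U).

Definition vector_partial_order (R : realType) (X : lmodType R)
  (ge : X -> X -> Prop) : Prop :=
  [/\ (forall x, ge x x),
      (forall x y, ge x y -> ge y x -> x = y),
      (forall x y z, ge x y -> ge y z -> ge x z),
      (forall x y z, ge x y -> ge (x + z) (y + z)) &
      (forall (a : R) x y, 0 <= a -> ge x y -> ge (a *: x) (a *: y))].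

Definition pos_cone (R : realType) (X : lmodType R) (ge : X -> X -> Prop) : set X :=
  [set x | ge x 0].

Definition vsubspace (R : realType) (X : lmodType R) (M : set X) : Prop :=
  M 0 /\ forall (a : R) x y, M x -> M y -> M (a *: x + y).

Definition has_dim (R : realType) (X : lmodType R) (M : set X) (n : nat) : Prop :=
  exists b : 'I_n -> X,
    (forall c : 'I_n -> R, \sum_(i < n) c i *: b i = 0 -> forall i, c i = 0) /\
    M = [set \sum_(i < n) c i *: b i | c in [set: 'I_n -> R]].

(* pi : M -> R linear (values outside M are irrelevant) *)
Definition linear_on (R : realType) (X : lmodType R) (M : set X) (pi : X -> R) : Prop :=
  forall (a : R) x y, M x -> M y -> pi (a *: x + y) = a * pi x + pi y.

Definition cont_linear_functional (R : realType) (X : tvsType R) (phi : X -> R) : Prop :=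
  (forall (a : R) x y, phi (a *: x + y) = a * phi x + phi y) /\ continuous phi.

Definition polyhedral (R : realType) (X : tvsType R) (A : set X) : Prop :=
  exists (k : nat) (phi : 'I_k -> X -> R) (alpha : 'I_k -> R),
    (forall i, cont_linear_functional (phi i)) /\
    A = \bigcap_(i in [set: 'I_k]) [set x | phi i x >= alpha i].

Definition rho (R : realType) (X : lmodType R) (M A : set X) (pi : X -> R) (x : X)
  : \bar R :=
  ereal_inf [set (pi z)%:E | z in [set z | M z /\ A (x + z)]].

Definition optimal_payoffs (R : realType) (X : lmodType R) (M A : set X)
  (pi : X -> R) (x : X) : set X :=
  [set z | [/\ M z, A (x + z) & (pi z)%:E = rho M A pi x]].

From HB Require Import structures.
From mathcomp Require Import all_boot all_order all_algebra.
From mathcomp Require Import all_classical all_reals all_analysis.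
From mathcomp Require Import ring lra.
Set Implicit Arguments. Unset Strict Implicit.
Import Order.TTheory GRing.Theory Num.Theory numFieldNormedType.Exports.
Local Open Scope classical_set_scope.
Local Open Scope ring_scope.

(** A polyhedral acceptance set turns the computation of [rho] into a linear
    program over the affine space [M], with finitely many affine constraints
    [alpha i <= phi i (x + z)].  Such a program attains its infimum whenever
    it is feasible and bounded below, in any vector space: by induction on
    the number of constraints, either dropping the last constraint keeps a
    minimizer feasible, or some point [w] violating it already does at least
    as well as every feasible point; then every feasible [y] is beaten by the
    point where the segment [[w, y]] crosses the last constraint's boundary
    hyperplane, on which the program has one constraint less.  Finiteness of
    [rho] provides feasibility and boundedness. *)

Section ArgMin.
Variables (R : realType) (T : Type).

Definition argmin_on (S : set T) (f : T -> R) (c : T) :=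
  S c /\ forall y, S y -> f c <= f y.

Lemma ereal_inf_argmin (S : set T) (f : T -> R) (c : T) :
  argmin_on S f c -> ereal_inf [set (f z)%:E | z in S] = (f c)%:E.
Proof.
move=> [Sc cmin]; apply/le_anti/andP; split.
  by apply: ereal_inf_lbound; exists c.
by apply: le_ereal_inf_tmp => _ [z Sz <-]; rewrite lee_fin cmin.
Qed.

Lemma ereal_inf_fin_num_neq0 (S : set T) (f : T -> R) :
  ereal_inf [set (f z)%:E | z in S] \is a fin_num -> S !=set0.
Proof.
apply: contraPP => /set0P/negP/negbNE/eqP ->.
by rewrite image_set0 ereal_inf0.
Qed.

End ArgMin.

Section AffineProgram.
Variables (R : realType) (V : lmodType R).
Implicit Types (E : set V) (f G : V -> R) (u v w y : V) (t : R).

Definition affine_closed E :=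
  forall u v t, E u -> E v -> E ((1 - t) *: u + t *: v).

Definition affine_on E f :=
  forall u v t, E u -> E v -> f ((1 - t) *: u + t *: v) = (1 - t) * f u + t * f v.

Definition feasible E (k : nat) (g : 'I_k -> V -> R) (a : 'I_k -> R) :=
  [set y | E y /\ forall i, a i <= g i y].

Lemma affine_on_sub E1 E2 f : E1 `<=` E2 -> affine_on E2 f -> affine_on E1 f.
Proof. by move=> sE fE u v t /sE Eu /sE Ev; apply: fE. Qed.

Lemma affine_closed_level E G b :
  affine_closed E -> affine_on E G -> affine_closed [set v | E v /\ G v = b].
Proof.
move=> HE HG u v t [Eu Gu] [Ev Gv]; split; first exact: HE.
by rewrite HG // Gu Gv; ring.
Qed.

Lemma affine_on_ge E G b u v t : affine_on E G -> E u -> E v -> 0 <= t <= 1 ->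
  b <= G u -> b <= G v -> b <= G ((1 - t) *: u + t *: v).
Proof.
move=> HG Eu Ev /andP[t0 t1] Gu Gv; rewrite HG //.
have : 0 <= (1 - t) * (G u - b) by apply: mulr_ge0; lra.
have : 0 <= t * (G v - b) by apply: mulr_ge0; lra.
lra.
Qed.

Lemma affine_on_ivt E G b w y : affine_on E G -> E w -> E y ->
  G w < b -> b <= G y -> exists2 t, 0 <= t <= 1 & G ((1 - t) *: w + t *: y) = b.
Proof.
move=> HG Ew Ey Gw Gy; have Gwy : 0 < G y - G w by lra.
exists ((b - G w) / (G y - G w)).
  by rewrite divr_ge0 ?ler_pdivrMr /=; lra.
rewrite HG //.
have -> : (1 - (b - G w) / (G y - G w)) * G w + (b - G w) / (G y - G w) * G y
        = G w + (b - G w) / (G y - G w) * (G y - G w) by ring.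
by rewrite divfK ?gt_eqF //; ring.
Qed.

Lemma affine_lbounded_constant E f p y : affine_closed E -> affine_on E f ->
  has_lbound (f @` E) -> E p -> E y -> f p <= f y.
Proof.
move=> HE Hf [L HL] Ep Ey; rewrite leNgt; apply/negP => fyp.
pose t := (f p - L) / (f p - f y) + 1.
have := HL _ (imageP f (HE p y t Ep Ey)); rewrite /= Hf //.
have -> : (1 - t) * f p + t * f y
        = f p - (f p - L) / (f p - f y) * (f p - f y) - (f p - f y)
  by rewrite /t; ring.
by rewrite divfK ?gt_eqF ?subr_gt0 //; lra.
Qed.

Lemma feasible_convex E k (g : 'I_k -> V -> R) a u v t :
  (forall i, affine_on E (g i)) -> affine_closed E ->
  feasible E g a u -> feasible E g a v -> 0 <= t <= 1 ->
  feasible E g a ((1 - t) *: u + t *: v).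
Proof.
move=> Hg HE [Eu gu] [Ev gv] t01; split; first exact: HE.
by move=> i; apply: (affine_on_ge (Hg i)).
Qed.

Lemma feasibleS E k (g : 'I_k.+1 -> V -> R) a :
  feasible E g a = feasible E (fun j => g (lift ord_max j)) (fun j => a (lift ord_max j))
                   `&` [set y | a ord_max <= g ord_max y].
Proof.
apply/seteqP; split=> [y [Ey gy]|y [[Ey gy] gmy]].
  by split; [split=> // j|]; apply: gy.
by split => // i; case: (unliftP ord_max i) => [j ->|->].
Qed.

Lemma argmin_or_better_outside E f k (g : 'I_k -> V -> R) a G b :
  let P := feasible E g a `&` [set y | b <= G y] in
  (has_lbound (f @` feasible E g a) -> exists c, argmin_on (feasible E g a) f c) ->
  has_lbound (f @` P) ->
  (exists c, argmin_on P f c) \/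
  exists w, [/\ feasible E g a w, G w < b & forall y, P y -> f w <= f y].
Proof.
move=> P IH [L HL].
have [/IH[c [P'c cmin]]|unbounded] := pselect (has_lbound (f @` feasible E g a)).
  have [Gc|Gc] := lerP b (G c).
    by left; exists c; split=> // y [P'y _]; apply: cmin.
  by right; exists c; split=> // y [P'y _]; apply: cmin.
have [w P'w fw] : exists2 w, feasible E g a w & f w < L.
  apply: contra_notP unbounded => small; exists L => _ [y P'y <-].
  by rewrite leNgt; apply/negP => fy; apply: small; exists y.
right; exists w; split=> //.
  by rewrite ltNge; apply/negP => Gw; have := HL _ (imageP f (conj P'w Gw)); lra.
by move=> y Py; have := HL _ (imageP f Py); lra.
Qed.

Lemma argmin_from_hyperplane E f k (g : 'I_k -> V -> R) a G b w c :
  affine_closed E -> affine_on E f -> (forall i, affine_on E (g i)) -> affine_on E G ->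
  feasible E g a w -> G w < b ->
  (forall y, (feasible E g a `&` [set y | b <= G y]) y -> f w <= f y) ->
  argmin_on (feasible [set v | E v /\ G v = b] g a) f c ->
  argmin_on (feasible E g a `&` [set y | b <= G y]) f c.
Proof.
move=> HE Hf Hg HG P'w Gw wmin [[[Ec Gc] gc] cmin].
split=> [|y [P'y Gy]]; first by split; [split|rewrite /= Gc].
have [Ew _] := P'w; have [Ey _] := P'y.
have [s s01 Gs] := affine_on_ivt HG Ew Ey Gw Gy.
have [Ez gz] := feasible_convex Hg HE P'w P'y s01.
apply: (le_trans (cmin _ (conj (conj Ez Gs) gz))); rewrite Hf //.
have fwy := wmin y (conj P'y Gy); move: s01 => /andP[s0 s1].
have : 0 <= (1 - s) * (f y - f w) by apply: mulr_ge0; lra.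
lra.
Qed.

Lemma affine_program_argmin k E f (g : 'I_k -> V -> R) a :
  affine_closed E -> affine_on E f -> (forall i, affine_on E (g i)) ->
  feasible E g a !=set0 -> has_lbound (f @` feasible E g a) ->
  exists c, argmin_on (feasible E g a) f c.
Proof.
elim: k E f g a => [|k IH] E f g a HE Hf Hg [p Pp] Hlb.
  exists p; split=> // y [Ey _]; have [Ep _] := Pp.
  apply: affine_lbounded_constant Hf _ Ep Ey => //.
  case: Hlb => L HL; exists L => _ [z Ez <-].
  by apply: HL; exists z => //; split=> // - [].
rewrite feasibleS in Pp Hlb *.
set g' := fun j => g (lift ord_max j); set a' := fun j => a (lift ord_max j).
have Hg' : forall j, affine_on E (g' j) by move=> j; apply: Hg.
have [|//|[w [P'w Gw wmin]]] := argmin_or_better_outside (IH E f g' a' HE Hf Hg' _) Hlb.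
  by case: Pp => P'p _; exists p.
pose Eb := [set v | E v /\ g ord_max v = a ord_max].
have sEbE : Eb `<=` E by move=> v [].
have [[Ew _] [[Ep _] Gp]] := (P'w, Pp).
have [t t01 Gt] := affine_on_ivt (Hg ord_max) Ew Ep Gw Gp.
have Ebne : feasible Eb g' a' !=set0.
  have [Ez gz] := feasible_convex Hg' HE P'w Pp.1 t01.
  by exists ((1 - t) *: w + t *: p).
have Eblb : has_lbound (f @` feasible Eb g' a').
  case: Hlb => L HL; exists L => _ [y [[Ey Gy] gy] <-].
  by apply: HL; exists y => //; split; [split|rewrite /= Gy].
have [c cmin] := IH Eb f g' a' (affine_closed_level HE (Hg _))
  (affine_on_sub sEbE Hf) (fun j => affine_on_sub sEbE (Hg' j)) Ebne Eblb.
by exists c; apply: (argmin_from_hyperplane HE Hf Hg' (Hg ord_max) P'w Gw wmin cmin).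
Qed.

End AffineProgram.

Lemma vsubspace_affine_closed (R : realType) (V : lmodType R) (M : set V) :
  vsubspace M -> affine_closed M.
Proof.
move=> [M0 HM] u v t Mu Mv; apply: (HM) => //.
by have := HM t v 0 Mv M0; rewrite addr0.
Qed.

Lemma linear_on_affine_on (R : realType) (V : lmodType R) (M : set V) (pi : V -> R) :
  vsubspace M -> linear_on M pi -> affine_on M pi.
Proof.
move=> [M0 HM] Hpi u v t Mu Mv.
have pi0 : pi 0 = 0 by have := Hpi 1 0 0 M0 M0; rewrite scaler0 addr0 mul1r; lra.
have Mtv : M (t *: v) by have := HM t v 0 Mv M0; rewrite addr0.
rewrite Hpi //; have := Hpi t v 0 Mv M0.
by rewrite addr0 pi0 addr0 => ->.
Qed.

Lemma linear_translate_affine_on (R : realType) (V : lmodType R) (E : set V)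
    (phi : V -> R) (x : V) :
  (forall (a : R) u v, phi (a *: u + v) = a * phi u + phi v) ->
  affine_on E (fun z => phi (x + z)).
Proof.
move=> Hphi u v t _ _.
have phi0 : phi 0 = 0 by have := Hphi 1 0 0; rewrite scaler0 addr0 mul1r; lra.
have phiZ a u' : phi (a *: u') = a * phi u' by rewrite -[a *: u']addr0 Hphi phi0 addr0.
rewrite [x + _](_ : _ = (1 - t) *: (x + u) + t *: (x + v)).
  by rewrite Hphi phiZ.
by rewrite !scalerDr addrACA -scalerDl subrK scale1r.
Qed.

Theorem mainTheorem10 (R : realType) (X : tvsType R) (ge : X -> X -> Prop)
  (M : set X) (dimM : nat) (pi : X -> R) (A : set X) :
  hausdorff_space X ->
  first_countable X ->
  vector_partial_order ge ->
  vsubspace M -> has_dim M dimM -> (1 < dimM)%N ->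
  linear_on M pi ->
  (* (A1) *)
  (exists U, [/\ M U, pos_cone ge U & pi U = 1]) ->
  (* (A2) *)
  closed A -> A 0 -> A <> setT ->
  (forall x y, A x -> pos_cone ge y -> A (x + y)) ->
  (* (A3) *)
  (forall x, rho M A pi x \is a fin_num) ->
  continuous (fun x => fine (rho M A pi x)) ->
  polyhedral A ->
  forall x : X, optimal_payoffs M A pi x !=set0.
Proof.
move=> _ _ _ HM _ _ Hpi _ _ _ _ _ Hfin _ [k [phi [alpha [Hphi HA]]]] x.
have inA y : A y <-> forall i, alpha i <= phi i y.
  by rewrite HA; split=> [Ay i|Ay i _]; apply: Ay.
pose S := feasible M (fun i z => phi i (x + z)) alpha.
have rhoE : rho M A pi x = ereal_inf [set (pi z)%:E | z in S].
  rewrite /rho; congr (ereal_inf [set (pi z)%:E | z in _]).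
  by apply/seteqP; split=> z [Mz Az]; split=> //; apply/inA.
have Sne : S !=set0 by apply: (ereal_inf_fin_num_neq0 (f := pi)); rewrite -rhoE.
have Slb : has_lbound (pi @` S).
  exists (fine (rho M A pi x)) => _ [z Sz <-].
  by rewrite -lee_fin fineK // rhoE; apply: ereal_inf_lbound; exists z.
have [c cmin] := affine_program_argmin (vsubspace_affine_closed HM)
  (linear_on_affine_on HM Hpi) (fun i => linear_translate_affine_on x (Hphi i).1) Sne Slb.
have [[Mc /inA Ac] _] := cmin.
by exists c; split=> //; rewrite rhoE (ereal_inf_argmin cmin).
Qed.
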